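(* Let $Y:=C_0(\mathbb{R}^d)$ and $E_Y \subseteq Y$. Assume that for all $\Delta \in (0,1]$, all $(s,T) \in \Delta_J$, all $\epsilon \in (0,1]$ and all $f \in E_Y$ there exists $A_\epsilon \subseteq \Omega$ with $\mathbb{P}(A_\epsilon) \geq 1-\Delta$ such that the family $\{V_\epsilon(s,t)(\omega)f: t \in[s,T], \epsilon \in (0,1], \omega \in A_\epsilon \}$ converges uniformly to $0$ at infinity, is equicontinuous and is uniformly bounded. Then $\{V_\epsilon\}$ satisfies the compact containment criterion in $E_Y$: for every $f\in E_Y$, $s\in J$, $\Delta\in(0,1]$ and $T\in J(s)$ there exists a compact $K\subseteq Y$ with $\liminf_{\epsilon\to0}\mathbb P[V_\epsilon(s,t)f\in K\ \forall t\in[s,T]]\ge1-\Delta$.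
   Context: $C_0(\mathbb R^d)$ is the Banach space of continuous functions $\mathbb R^d\to\mathbb R$ vanishing at infinity, with sup norm. A family $\{f_\alpha\}$ converges uniformly to $0$ at infinity if for all $\eta>0$ there is $\delta>0$ with $\sup_\alpha|f_\alpha(z)|<\eta$ whenever $|z|>\delta$. $J$ is $\mathbb{R}^+$ or $[0,T_\infty]$, $\Delta_J=\{(s,t)\in J^2:s\le t\}$, $J(s)=\{t\in J:t\ge s\}$. An inhomogeneous $Y$-semigroup is a map $\Gamma:\Delta_J\to\mathcal B(Y)$ with $\Gamma(t,t)=I$, $\Gamma(s,r)\Gamma(r,t)=\Gamma(s,t)$. Probabilistic setting: $(\Omega,\mathcal F,\mathbb P)$ complete; $X$ finite; $(x_n,T_n)_{n\ge0}$ a Markov renewal process ($x_n\in X$, $T_0=0<T_1<\dots$) with semi-Markov kernel $Q$; $N(t)=\sup\{n:T_n\le t\}$ (finite on $\Omega$ after restriction to a full-measure event); $x(t)=x_{N(t)}$; $N_s(t)=N(t)-N(s)$, $T_0(s)=s$, $T_n(s)=T_{N(s)+n}$ ($n\ge1$), $x_n(s)=x(T_n(s))$. $(\Gamma_x)_{x\in X}$ are inhomogeneous $Y$-semigroups and $(D^\epsilon(x,y))_{x,y\in X,\epsilon\in(0,1]}\subseteq\mathcal B(Y)$ (measurable in their arguments). With $t^{\epsilon,s}=s+\epsilon(t-s)$, $T^{\epsilon,s}_k(s)=s+\epsilon(T_k(s)-s)$, $V_\epsilon(s,t)=\big[\prod_{k=1}^{N_s(t^{1/\epsilon,s})}\Gamma_{x_{k-1}(s)}(T^{\epsilon,s}_{k-1}(s),T^{\epsilon,s}_k(s))D^\epsilon(x_{k-1}(s),x_k(s))\big]\Gamma_{x(t^{1/\epsilon,s})}(T^{\epsilon,s}_{N_s(t^{1/\epsilon,s})}(s),t)$,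 product ordered left to right, empty product $I$. *)

From HB Require Import structures.
From mathcomp Require Import all_boot all_order all_algebra.
From mathcomp Require Import all_classical all_reals all_analysis.
Set Implicit Arguments. Unset Strict Implicit. Unset Printing Implicit Defensive.
Import Order.TTheory GRing.Theory Num.Theory.
Import numFieldNormedType.Exports.
Local Open Scope classical_set_scope.
Local Open Scope ring_scope.

Section Defs.
Variables (R : realType) (d : nat).

(* functions R^d -> R ; R^d is 'rV[R]_d with its (max) norm *)
Definition Fn := 'rV[R]_d -> R.
Definition Op := Fn -> Fn.

Definition vanish_at_infinity (f : Fn) : Prop :=
  forall eta : R, 0 < eta -> exists delta : R,
    forall z : 'rV[R]_d, delta < `|z| -> `|f z| < eta.

Definition C0 : set Fn := [set f | continuous f /\ vanish_at_infinity f].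

Definition bounded_op (A : Op) : Prop :=
  (forall f, C0 f -> C0 (A f)) /\
  (forall (a : R) f g, C0 f -> C0 g -> A (a *: f + g) = a *: A f + A g) /\
  (exists M : R, forall f (c : R), C0 f -> (forall z, `|f z| <= c) ->
     forall z, `|A f z| <= M * c).

Definition unif_vanish (F : set Fn) : Prop :=
  forall eta : R, 0 < eta -> exists delta : R,
    forall g, F g -> forall z : 'rV[R]_d, delta < `|z| -> `|g z| < eta.

Definition equicontinuous_fam (F : set Fn) : Prop :=
  forall (z : 'rV[R]_d) (e : R), 0 < e -> exists2 del : R, 0 < del &
    forall g, F g -> forall w : 'rV[R]_d, `|z - w| < del -> `|g z - g w| < e.

Definition unif_bounded (F : set Fn) : Prop :=
  exists M : R, forall g, F g -> forall z, `|g z| <= M.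

Definition time_set (J : set R) : Prop :=
  J = `[0, +oo[%classic \/ exists Tinf : R, 0 <= Tinf /\ J = `[0, Tinf]%classic.

Definition inhom_semigroup (J : set R) (G : R -> R -> Op) : Prop :=
  (forall s t, J s -> J t -> s <= t -> bounded_op (G s t)) /\
  (forall t f, J t -> C0 f -> G t t f = f) /\
  (forall s r t f, J s -> J r -> J t -> s <= r -> r <= t -> C0 f ->
     G s r (G r t f) = G s t f).

End Defs.

Section Prob.
Local Open Scope ereal_scope.
Context (dm : measure_display) (Omega : measurableType dm) (R : realType).

Definition complete_prob (P : probability Omega R) : Prop :=
  forall N : set Omega, measurable N -> P N = 0 ->
    forall A : set Omega, A `<=` N -> measurable A.

(* inner probability of an arbitrary (possibly non-measurable) set *)
Definition inner_prob (P : probability Omega R) (A : set Omega) : \bar R :=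
  ereal_sup [set v | exists B : set Omega, measurable B /\ B `<=` A /\ v = P B].

(* Markov renewal process (x_n, T_n) with semi-Markov kernel Q, described by
   its finite-dimensional distributions; T_0 = 0 < T_1 < ..., and N(t) finite *)
Definition markov_renewal (X : finType) (P : probability Omega R)
  (x : nat -> Omega -> X) (T : nat -> Omega -> R) (Q : X -> X -> R -> R) : Prop :=
  (forall n y, measurable [set w | x n w = y]) /\
  (forall n, measurable_fun setT (T n)) /\
  (forall w, T 0%N w = 0%R) /\
  (forall (n : nat) w, (T n w < T n.+1 w)%R) /\
  (forall w (t : R), exists n, (t < T n w)%R) /\
  (forall (n : nat) (y : nat -> X) (u : nat -> R),
     P [set w | (forall k, (k <= n)%N -> x k w = y k) /\
                (forall k, (1 <= k <= n)%N -> (T k w - T k.-1 w <= u k)%R)]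
     = P [set w | x 0%N w = y 0%N] *
       (\prod_(1 <= k < n.+1) Q (y k.-1) (y k) (u k))%:E).

End Prob.

Section V.
Context (dm : measure_display) (Omega : measurableType dm) (R : realType)
  (d : nat) (X : finType).
Variables (x : nat -> Omega -> X) (T : nat -> Omega -> R)
  (Gam : X -> R -> R -> Op R d) (D : R -> X -> X -> Op R d).

(* N(t) = sup {n | T_n <= t} *)
Definition Nc (w : Omega) (t : R) : nat :=
  xget 0%N [set n | T n w <= t /\ t < T n.+1 w].
Definition xt (w : Omega) (t : R) : X := x (Nc w t) w.
Definition Ns (w : Omega) (s t : R) : nat := (Nc w t - Nc w s)%N.
Definition Tks (w : Omega) (s : R) (k : nat) : R :=
  if k is 0%N then s else T (Nc w s + k)%N w.
Definition xks (w : Omega) (s : R) (k : nat) : X := xt w (Tks w s k).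
Definition rescale (eps s t : R) : R := s + eps * (t - s).
Definition Tkes (eps : R) (w : Omega) (s : R) (k : nat) : R :=
  rescale eps s (Tks w s k).

(* V_eps(s,t)(w) ; operator products are compositions, ordered left to right *)
Definition Veps (eps s t : R) (w : Omega) : Op R d :=
  let n := Ns w s (rescale eps^-1 s t) in
  foldr (fun k acc =>
           (Gam (xks w s k.-1) (Tkes eps w s k.-1) (Tkes eps w s k))
             \o (D eps (xks w s k.-1) (xks w s k)) \o acc)
        (Gam (xt w (rescale eps^-1 s t)) (Tkes eps w s n) t)
        (iota 1 n).

End V.

From HB Require Import structures.
From mathcomp Require Import all_boot all_order all_algebra.
From mathcomp Require Import all_classical all_reals all_analysis.
From mathcomp Require Import ring lra.
Import Order.TTheory GRing.Theory Num.Theory.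
Import numFieldNormedType.Exports.
Local Open Scope classical_set_scope.
Local Open Scope ring_scope.

(* The compact set is the closure, in the topology of compact convergence, of
   the family of trajectories V_eps(s,t)(w) f with w in A_eps.  Equicontinuity
   and uniform boundedness make it compact there (Arzela-Ascoli); uniform
   vanishing at infinity passes to the closure and upgrades compact convergence
   to uniform convergence, so the closure is compact in C_0 with the sup norm.
   Since every trajectory from A_eps lies in it, the inner probability of
   staying in K is at least P(A_eps) >= 1 - Del for every eps. *)

Lemma closure_fam_compact_approx {U : topologicalType} {R : realType}
    {W : set (U -> R)} {p : U -> R} :
  closure (W : set {family compact, U -> R}) p ->
  forall z1 z2 (e : R), 0 < e ->
  exists2 h, W h & `|p z1 - h z1| < e /\ `|p z2 - h z2| < e.
Proof.
move=> clp z1 z2 e e0.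
have near_at z := @fam_nbhs _ R compact [set z] _
  (p : {family compact, U -> R}) (entourage_ball R (PosNum e0)) (@compact_set1 _ z).
have [h [Wh [h1 h2]]] := clp _ (filterI (near_at z1) (near_at z2)).
exists h => //; split.
- by have := h1 z1 erefl; rewrite /= -ball_normE.
- by have := h2 z2 erefl; rewrite /= -ball_normE.
Qed.

Section ClosureOfFamily.
Variables (R : realType) (d : nat) (W : set (Fn R d)).

Let cl := closure (W : set {family compact, 'rV[R]_d -> R}).

Lemma closure_unif_vanish : unif_vanish W -> unif_vanish cl.
Proof.
move=> vanW eta eta0.
have eta20 : 0 < eta / 2 by rewrite divr_gt0.
have [delta vanW2] := vanW _ eta20.
exists delta => p clp z zd.
have [h Wh [phz _]] := closure_fam_compact_approx clp z z _ eta20.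
have := vanW2 h Wh z zd.
have := ler_normD (p z - h z) (h z); rewrite subrK; lra.
Qed.

Lemma closure_C0 : equicontinuous_fam W -> unif_vanish W -> cl `<=` @C0 R d.
Proof.
move=> eqcW vanW p clp; split; last first.
  move=> eta /(closure_unif_vanish vanW)[delta vanp].
  by exists delta => z; apply: vanp.
move=> z; apply/(@cvgrPdist_lt _ _ _ _ (nbhs_filter z)) => e e0.
have e30 : 0 < e / 3 by rewrite divr_gt0.
have [del del0 eqcz] := eqcW z _ e30.
apply/nbhs_ballP; exists del => //= w; rewrite -ball_normE => /= zw.
have [h Wh [phz phw]] := closure_fam_compact_approx clp z w _ e30.
have hzw := eqcz h Wh w zw.
have : `|p z - p w| <= `|p z - h z| + `|h z - h w| + `|p w - h w|.
  rewrite (_ : p z - p w = (p z - h z) + (h z - h w) - (p w - h w)); last by ring.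
  by rewrite (le_trans (ler_normB _ _)) // lerD2r ler_normD.
lra.
Qed.

Lemma closure_fam_compact :
  equicontinuous_fam W -> unif_bounded W -> compact cl.
Proof.
move=> eqcW [M boundW].
rewrite /cl -precompactE.
apply: pointwise_precompact_equicontinuous; first exact: norm_hausdorff.
- move=> z; rewrite precompactE.
  apply: (@subclosed_compact _ _ `[- M, M]%classic);
    [exact: closed_closure | exact: segment_compact |].
  rewrite (closure_id `[- M, M]%classic).1; last exact: interval_closed.
  apply: closureS.
  by move=> _ [g Wg <-]; rewrite /= in_itv /= -ler_norml; apply: boundW.
- move=> z E; rewrite -entourage_from_ballE => -[e /= e0 sE].
  have [del del0 eqcz] := eqcW z e e0.
  apply/nbhs_ballP; exists del => //= w; rewrite -ball_normE => /= zw g Wg.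
  by apply: sE; rewrite /= -ball_normE; apply: eqcz.
Qed.

(* Outside a large ball every function of [cl] is uniformly small, and on the
   (compact) ball compact convergence is uniform convergence. *)
Lemma closure_fam_compact_uniform :
  unif_vanish W -> compact cl -> compact (cl : set {uniform 'rV[R]_d -> R}).
Proof.
move=> vanW cptcl F PF Fcl.
have [p [clp clusterFp]] := cptcl F PF Fcl.
exists p; split => // A B FA /uniform_nbhs [E [entE sB]].
move: entE; rewrite -entourage_from_ballE => -[e /= e0 sE].
have e20 : 0 < e / 2 by rewrite divr_gt0.
have [delta vancl] := closure_unif_vanish vanW _ e20.
pose C := closed_ball_ Num.Def.normr (0 : 'rV[R]_d) delta.
have CE z : C z = (`|z| <= delta) by rewrite /C /closed_ball_ /= sub0r normrN.
have cptC : compact C.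
  apply: bounded_closed_compact; last exact: closed_closed_ball_.
  apply: filterS (nbhs_pinfty_ge (num_real delta)) => M dM z.
  by rewrite CE => /le_trans; apply.
have nearC := @fam_nbhs _ R compact C _ (p : {family compact, 'rV[R]_d -> R})
  (entourage_ball R (PosNum e20)) cptC.
have [h [[Ah clh] ph]] := clusterFp _ _ (filterI FA Fcl) nearC.
exists h; split => //; apply: sB => z _; apply: sE; rewrite /= -ball_normE /=.
have [Cz|nCz] := pselect (C z).
  by have := ph z Cz; rewrite /= -ball_normE /=; lra.
have zd : delta < `|z| by rewrite CE in nCz; rewrite real_ltNge ?num_real //; apply/negP.
have := vancl p clp z zd; have := vancl h clh z zd.
have := ler_normB (p z) (h z); lra.
Qed.

End ClosureOfFamily.

Lemma inner_prob_ge {dm : measure_display} {Omega : measurableType dm}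
    {R : realType} (P : probability Omega R) {A B : set Omega} :
  measurable B -> B `<=` A -> (P B <= inner_prob P A)%E.
Proof. by move=> mB BA; apply: ereal_sup_ubound; exists B. Qed.

Theorem proposition4p9 (dm : measure_display) (Omega : measurableType dm)
  (R : realType) (d : nat) (X : finType) (P : probability Omega R)
  (J : set R) (x : nat -> Omega -> X) (T : nat -> Omega -> R)
  (Q : X -> X -> R -> R) (Gam : X -> R -> R -> Op R d)
  (D : R -> X -> X -> Op R d) (EY : set (Fn R d)) :
  complete_prob P ->
  time_set J ->
  markov_renewal P x T Q ->
  (forall y, inhom_semigroup J (Gam y)) ->
  (forall eps y z, 0 < eps <= 1 -> bounded_op (D eps y z)) ->
  EY `<=` @C0 R d ->
  (forall (Del : R) (s Tm : R) (f : Fn R d),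
     0 < Del <= 1 -> J s -> J Tm -> s <= Tm -> EY f ->
     exists A : R -> set Omega,
       (forall eps, 0 < eps <= 1 ->
          measurable (A eps) /\ ((1 - Del)%:E <= P (A eps))%E) /\
       let Fam := [set g | exists t eps w, s <= t <= Tm /\ 0 < eps <= 1 /\
                     A eps w /\ g = Veps x T Gam D eps s t w f] in
       unif_vanish Fam /\ equicontinuous_fam Fam /\ unif_bounded Fam) ->
  forall (f : Fn R d) (s : R) (Del : R) (Tm : R),
    EY f -> J s -> 0 < Del <= 1 -> J Tm -> s <= Tm ->
    exists K : set {uniform 'rV[R]_d -> R},
      compact K /\ K `<=` @C0 R d /\
      (forall eta : R, 0 < eta -> exists2 eps0 : R, 0 < eps0 &
         forall eps, 0 < eps < eps0 ->
           ((1 - Del - eta)%:E <=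
              inner_prob P [set w | forall t : R, (s <= t <= Tm)%R ->
                               K (Veps x T Gam D eps s t w f)])%E).
Proof.
move=> _ _ _ _ _ _ family_props f s Del Tm EYf Js Del01 JTm sTm.
have [A [probA]] := family_props Del s Tm f Del01 Js JTm sTm EYf.
rewrite /=; set W := (X in unif_vanish X /\ _) => -[vanW [eqcW boundW]].
exists (closure (W : set {family compact, 'rV[R]_d -> R})); split.
  exact/closure_fam_compact_uniform/closure_fam_compact.
split; first exact: closure_C0.
move=> eta eta0; exists 1 => // eps /andP[eps0 eps1].
have eps01 : 0 < eps <= 1 by rewrite eps0 ltW.
have [mA PA] := probA eps eps01.
have A_stays : A eps `<=` [set w | forall t, s <= t <= Tm ->
    closure (W : set {family compact, 'rV[R]_d -> R}) (Veps x T Gam D eps s t w f)].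
  move=> w Aw t st; apply: subset_closure; exists t, eps, w; do !split => //.
apply: (le_trans _ (inner_prob_ge P mA A_stays)); apply: le_trans PA.
by rewrite lee_fin; lra.
Qed.
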